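(* Let $\mathbb A=(3,12^2)$ be the Archimedean (Fisher) lattice obtained from the hexagonal lattice $\mathbb H$ by replacing each vertex by a triangle. Then the connective constants satisfy $$\frac{1}{\kappa(\mathbb A)^2}+\frac{1}{\kappa(\mathbb A)^3}=\frac{1}{\kappa(\mathbb H)}.$$
   Context: For a vertex-transitive lattice $\mathcal L$, the connective constant is $\kappa(\mathcal L)=\lim_{n\to\infty}\sigma_n^{1/n}$, where $\sigma_n$ is the number of self-avoiding walks (paths visiting no vertex twice) of length $n$ starting at a fixed vertex. In $\mathbb A$, each vertex of $\mathbb H$ is replaced by a triangle whose three vertices are each joined to one of the three edges formerly incident to that vertex; edges lying in such triangles are called triangular. *)

From Stdlib Require Import Reals ZArith List ListDec.
Import ListNotations.
Open Scope R_scope.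

(** Both lattices are 3-regular; we describe each by a neighbour function
    [nb : V -> dir -> V] listing the three (pairwise distinct) neighbours of
    a vertex.  A walk of length n from v is then determined by its sequence of
    n direction choices. *)
Inductive dir : Set := D0 | D1 | D2.

Definition dir_next (d : dir) : dir :=
  match d with D0 => D1 | D1 => D2 | D2 => D0 end.

(** Hexagonal lattice H (brick-wall embedding): vertices (x, y, colour).
    A black vertex (x,y,false) is adjacent to the white vertices
    (x,y,true), (x-1,y,true), (x,y-1,true). *)
Definition HV : Set := (Z * Z * bool)%type.

Definition hnb (v : HV) (d : dir) : HV :=
  match v with
  | (x, y, false) =>
      match d with
      | D0 => (x, y, true)
      | D1 => ((x - 1)%Z, y, true)
      | D2 => (x, (y - 1)%Z, true)
      end
  | (x, y, true) =>
      match d with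
      | D0 => (x, y, false)
      | D1 => ((x + 1)%Z, y, false)
      | D2 => (x, (y + 1)%Z, false)
      end
  end.

(** Note: for every v and d, hnb (hnb v d) d = v, i.e. the edge of H at v in
    direction d is also the edge at its other endpoint in direction d. *)

(** Archimedean lattice A = (3,12^2): each vertex v of H is replaced by a
    triangle {(v,D0),(v,D1),(v,D2)}; vertex (v,i) is joined to the two other
    triangle vertices (triangular edges) and, by a non-triangular edge, to
    (hnb v i, i), the vertex of the neighbouring triangle lying on the former
    H-edge from v in direction i. *)
Definition AV : Set := (HV * dir)%type.

Definition anb (a : AV) (d : dir) : AV :=
  let (v, i) := a in
  match d with
  | D0 => (hnb v i, i)
  | D1 => (v, dir_next i)
  | D2 => (v, dir_next (dir_next i))
  end.

Definition HV_eq_dec : forall u v : HV, {u = v} + {u <> v}.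
Proof. decide equality; [apply Bool.bool_dec | decide equality; apply Z.eq_dec]. Defined.

Definition dir_eq_dec : forall u v : dir, {u = v} + {u <> v}.
Proof. decide equality. Defined.

Definition AV_eq_dec : forall u v : AV, {u = v} + {u <> v}.
Proof. decide equality; [apply dir_eq_dec | apply HV_eq_dec]. Defined.

Fixpoint traj {V : Type} (nb : V -> dir -> V) (v : V) (ds : list dir) : list V :=
  v :: match ds with
       | [] => []
       | d :: ds' => traj nb (nb v d) ds'
       end.

Fixpoint all_dirs (n : nat) : list (list dir) :=
  match n with
  | O => [[]]
  | S m => flat_map (fun ds => [D0 :: ds; D1 :: ds; D2 :: ds]) (all_dirs m)
  end.

(** Transparent decision procedure for [NoDup] (the Stdlib one is opaque). *)
Definition NoDup_dec' {V : Type} (eq_dec : forall u w : V, {u = w} + {u <> w})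
  (l : list V) : {NoDup l} + {~ NoDup l}.
Proof.
  induction l as [|a l IH].
  - left; constructor.
  - destruct (in_dec eq_dec a l) as [Hin|Hin].
    + right; intro H; inversion H; contradiction.
    + destruct IH as [IH|IH].
      * left; constructor; assumption.
      * right; intro H; inversion H; contradiction.
Defined.

Definition saw_count {V : Type} (eq_dec : forall u w : V, {u = w} + {u <> w})
  (nb : V -> dir -> V) (v : V) (n : nat) : nat :=
  length (filter (fun ds => if NoDup_dec' eq_dec (traj nb v ds) then true else false)
                 (all_dirs n)).

Definition H_origin : HV := (0%Z, 0%Z, false).
Definition A_origin : AV := (H_origin, D0).

Definition sigmaH (n : nat) : nat := saw_count HV_eq_dec hnb H_origin n.
Definition sigmaA (n : nat) : nat := saw_count AV_eq_dec anb A_origin n.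

Definition is_connective_constant (sigma : nat -> nat) (kappa : R) : Prop :=
  Un_cv (fun n => Rpower (INR (sigma n)) (/ INR n)) kappa.

(** We prove [1/kA^2 + 1/kA^3 = 1/kH] by comparing generating functions.
    A self-avoiding walk on A is a short walk inside its first triangle,
    followed by blocks "go round the current triangle the short or the long
    way (one or two triangular edges), then cross a non-triangular edge",
    ended by a tail inside the last triangle.  The directions of the
    non-triangular edges form a walk on H.  With [block_gf x = x^2 + x^3]:
    - every self-avoiding H-walk of length [n] lifts to A-walks of total
      weight at least [x^2 block_gf(x)^(n-1)] ([lower_bound]);
    - every self-avoiding A-walk projects to a non-reversing H-word that is
      self-avoiding except at its last step ([upper_bound]).
    Both lattices are vertex-transitive, so walk counts are submultiplicative
    and Fekete's lemma yields the connective constants [kH], [kA] together with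
    [kappa^n <= sigma_n].  Comparing radii of convergence, [kH block_gf(x) <= 1]
    for [x < 1/kA], and [kH block_gf(x) < 1] forces [x <= 1/kA]; since
    [block_gf] is continuous and increasing this gives [kH block_gf(1/kA) = 1]. *)

From Stdlib Require Import Reals Lra Lia List.
Import ListNotations.
Open Scope R_scope.

Lemma all_dirs_spec n ds : In ds (all_dirs n) <-> length ds = n.
Proof.
  revert ds; induction n as [|n IH]; intros ds; simpl.
  - split; [intros [<-|[]]; reflexivity|].
    destruct ds; simpl; [auto|discriminate].
  - rewrite in_flat_map. split.
    + intros [a [Ha Hin]]. apply IH in Ha.
      simpl in Hin; destruct Hin as [<-|[<-|[<-|[]]]]; simpl; lia.
    + destruct ds as [|d ds]; simpl; [discriminate|]. intros H.
      exists ds. split; [apply IH; lia|]. destruct d; simpl; tauto.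
Qed.

Lemma NoDup_flat_map_disjoint {A B : Type} (F : A -> list B) (l : list A) :
  NoDup l -> (forall a, In a l -> NoDup (F a)) ->
  (forall a b x, In a l -> In b l -> In x (F a) -> In x (F b) -> a = b) ->
  NoDup (flat_map F l).
Proof.
  induction l as [|a l IH]; simpl; intros Hnd HF Hdis; [constructor|].
  apply NoDup_cons_iff in Hnd as [Ha Hnd].
  apply NoDup_app; [apply HF; auto| apply IH; auto; intros; eapply Hdis; eauto|].
  intros y Hy Hy2. apply in_flat_map in Hy2 as [b [Hb Hyb]].
  assert (a = b) by (eapply Hdis; eauto). subst. contradiction.
Qed.

Lemma all_dirs_NoDup n : NoDup (all_dirs n).
Proof.
  induction n as [|n IH]; simpl.
  - repeat constructor; simpl; tauto.
  - apply NoDup_flat_map_disjoint; auto.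
    + intros a _. repeat constructor; simpl; intuition discriminate.
    + intros a b y _ _ Ha Hb. simpl in Ha, Hb.
      intuition (subst; try discriminate; congruence).
Qed.

Lemma length_flat_map_const {A B : Type} (F : A -> list B) (l : list A) k :
  (forall a, In a l -> length (F a) = k) -> length (flat_map F l) = (length l * k)%nat.
Proof.
  induction l as [|a l IH]; simpl; intros H; [reflexivity|].
  rewrite length_app, H, IH by auto. lia.
Qed.

Lemma traj_head {V : Type} (nb : V -> dir -> V) v ds : In v (traj nb v ds).
Proof. destruct ds; simpl; auto. Qed.

Section Walks.
Context {V : Type} (eqd : forall u w : V, {u = w} + {u <> w}) (nb : V -> dir -> V).

Definition is_saw (v : V) (ds : list dir) : bool :=
  if NoDup_dec' eqd (traj nb v ds) then true else false.

Definition saws (v : V) (n : nat) : list (list dir) := filter (is_saw v) (all_dirs n).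

Lemma saw_count_saws v n : saw_count eqd nb v n = length (saws v n).
Proof. reflexivity. Qed.

Lemma is_saw_spec v ds : is_saw v ds = true <-> NoDup (traj nb v ds).
Proof. unfold is_saw. destruct (NoDup_dec' eqd _); split; auto; discriminate. Qed.

Lemma in_saws v n ds : In ds (saws v n) <-> length ds = n /\ NoDup (traj nb v ds).
Proof. unfold saws. rewrite filter_In, all_dirs_spec, is_saw_spec. tauto. Qed.

Lemma saws_NoDup v n : NoDup (saws v n).
Proof. apply NoDup_filter, all_dirs_NoDup. Qed.

Fixpoint walk_end (v : V) (ds : list dir) : V :=
  match ds with [] => v | d :: ds' => walk_end (nb v d) ds' end.

Lemma traj_app v a b :
  traj nb v (a ++ b) = removelast (traj nb v a) ++ traj nb (walk_end v a) b.
Proof.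
  revert v; induction a as [|d a IH]; intros v; simpl; [reflexivity|].
  rewrite IH. destruct a; reflexivity.
Qed.

Lemma traj_app' v a b :
  traj nb v (a ++ b) = traj nb v a ++ tl (traj nb (walk_end v a) b).
Proof.
  revert v; induction a as [|d a IH]; intros v; simpl.
  - destruct b; reflexivity.
  - rewrite IH. reflexivity.
Qed.

Lemma saw_prefix v a b : NoDup (traj nb v (a ++ b)) -> NoDup (traj nb v a).
Proof. rewrite traj_app'. apply NoDup_app_remove_r. Qed.

Lemma saw_suffix v a b : NoDup (traj nb v (a ++ b)) -> NoDup (traj nb (walk_end v a) b).
Proof. rewrite traj_app. apply NoDup_app_remove_l. Qed.

Definition is_automorphism (phi : V -> V) : Prop :=
  (forall a b, phi a = phi b -> a = b) /\ (forall v d, nb (phi v) d = phi (nb v d)).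

Lemma automorphism_comp f g :
  is_automorphism f -> is_automorphism g -> is_automorphism (fun v => f (g v)).
Proof.
  intros [F1 F2] [G1 G2]; split; intros.
  - apply G1, F1; auto.
  - rewrite F2, G2; reflexivity.
Qed.

Lemma traj_automorphism phi : is_automorphism phi ->
  forall ds v, traj nb (phi v) ds = map phi (traj nb v ds).
Proof.
  intros [_ H]; induction ds as [|d ds IH]; intros v; simpl; [reflexivity|].
  rewrite H, IH. reflexivity.
Qed.

Lemma saw_count_automorphism phi : is_automorphism phi ->
  forall v n, saw_count eqd nb (phi v) n = saw_count eqd nb v n.
Proof.
  intros Hphi v n. rewrite !saw_count_saws. unfold saws. f_equal.
  apply filter_ext. intros ds.
  assert (NoDup (traj nb (phi v) ds) <-> NoDup (traj nb v ds)) as Hiff.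
  { rewrite traj_automorphism by exact Hphi. split; [apply NoDup_map_inv|].
    intros H. apply NoDup_map_NoDup_ForallPairs; auto.
    intros a b _ _ E; apply (proj1 Hphi); auto. }
  destruct (is_saw v ds) eqn:E1, (is_saw (phi v) ds) eqn:E2; auto.
  - apply is_saw_spec, Hiff, is_saw_spec in E1. congruence.
  - apply is_saw_spec, Hiff, is_saw_spec in E2. congruence.
Qed.

(** If the walk count does not depend on the starting point, it is
    submultiplicative: cut a walk of length [m + n] after [m] steps. *)
Lemma saw_count_submult (s : nat -> nat) (v : V) :
  (forall u n, saw_count eqd nb u n = s n) ->
  forall m n, (s (m + n) <= s m * s n)%nat.
Proof.
  intros Hs m n. rewrite <- (Hs v (m + n)%nat), <- (Hs v m), !saw_count_saws.
  transitivity (length (flat_map (fun a => map (fun b => a ++ b) (saws (walk_end v a) n))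
                                 (saws v m))).
  - apply NoDup_incl_length; [apply saws_NoDup|].
    intros ds Hds. apply in_saws in Hds as [Hl Hnd].
    rewrite <- (firstn_skipn m ds) in Hnd.
    apply in_flat_map. exists (firstn m ds). split.
    + apply in_saws. split; [rewrite length_firstn; lia|]. eapply saw_prefix; eauto.
    + apply in_map_iff. exists (skipn m ds). split; [apply firstn_skipn|].
      apply in_saws. split; [rewrite length_skipn; lia|]. eapply saw_suffix; eauto.
  - rewrite (length_flat_map_const _ _ (s n)); [lia|].
    intros a _. rewrite length_map, <- saw_count_saws, Hs. reflexivity.
Qed.

Lemma saw_count_pos v n c :
  (n <= length c)%nat -> NoDup (traj nb v c) -> (1 <= saw_count eqd nb v n)%nat.
Proof.
  intros Hl Hnd. rewrite saw_count_saws.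
  assert (In (firstn n c) (saws v n)) as Hin.
  { apply in_saws. split; [rewrite length_firstn; lia|].
    rewrite <- (firstn_skipn n c) in Hnd. eapply saw_prefix; eauto. }
  destruct (saws v n); [destruct Hin|simpl; lia].
Qed.

End Walks.

Lemma hnb_inv v d : hnb (hnb v d) d = v.
Proof. destruct v as [[x y] []], d; simpl; f_equal; try f_equal; lia. Qed.

(** Translations, the point reflection (which swaps the two colours) and
    the rotation by a third of a turn around a black vertex. *)
Definition translH (a b : Z) (v : HV) : HV :=
  match v with (x, y, c) => ((x + a)%Z, (y + b)%Z, c) end.
Definition reflH (v : HV) : HV :=
  match v with (x, y, c) => ((- x)%Z, (- y)%Z, negb c) end.
Definition rotH (v : HV) : HV :=
  match v with
  | (x, y, false) => ((- x - y)%Z, x, false)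
  | (x, y, true) => ((- x - y - 1)%Z, x, true)
  end.

Ltac hv_solve :=
  repeat match goal with
  | v : HV |- _ => destruct v as [[? ?] ?]
  | c : bool |- _ => destruct c
  | d : dir |- _ => destruct d
  end; simpl in *;
  repeat match goal with
  | H : (_, _) = (_, _) |- _ => injection H; clear H; intros
  end; subst; try discriminate; try (f_equal; try f_equal; lia).

Lemma translH_auto a b : is_automorphism hnb (translH a b).
Proof. split; intros; hv_solve. Qed.

Lemma reflH_auto : is_automorphism hnb reflH.
Proof. split; intros; hv_solve. Qed.

(** The rotation is an automorphism only up to a cyclic relabelling of the
    directions, which is why it is used on A rather than on H. *)
Lemma rotH_inj a b : rotH a = rotH b -> a = b.
Proof. intros; hv_solve. Qed.

Lemma rotH_shift v d : hnb (rotH v) (dir_next d) = rotH (hnb v d).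
Proof. hv_solve. Qed.

Lemma H_transitive u : exists phi, is_automorphism hnb phi /\ phi H_origin = u.
Proof.
  destruct u as [[x y] []].
  - exists (fun v => translH x y (reflH v)). split.
    + apply automorphism_comp; [apply translH_auto|apply reflH_auto].
    + simpl; f_equal; f_equal; lia.
  - exists (translH x y). split; [apply translH_auto|]. simpl; f_equal; f_equal; lia.
Qed.

Lemma saw_count_H u n : saw_count HV_eq_dec hnb u n = sigmaH n.
Proof.
  destruct (H_transitive u) as [phi [Hphi <-]].
  apply saw_count_automorphism, Hphi.
Qed.

(** Automorphisms of H lift to A (keeping the triangle corner), and the
    rotation of H together with the cyclic shift of corners is an
    automorphism of A; these reach every vertex of A. *)
Definition liftA (phi : HV -> HV) (a : AV) : AV := let (v, i) := a in (phi v, i).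
Definition rotA (a : AV) : AV := let (v, i) := a in (rotH v, dir_next i).

Lemma liftA_auto phi : is_automorphism hnb phi -> is_automorphism anb (liftA phi).
Proof.
  intros [H1 H2]; split.
  - intros [v i] [w j] E; injection E; intros; subst. f_equal; auto.
  - intros [v i] []; simpl; try reflexivity. rewrite H2; reflexivity.
Qed.

Lemma rotA_auto : is_automorphism anb rotA.
Proof.
  split.
  - intros [v i] [w j] E; injection E; intros E1 E2.
    apply rotH_inj in E2; subst. f_equal. destruct i, j; simpl in *; congruence.
  - intros [v i] []; simpl; try reflexivity. rewrite rotH_shift; reflexivity.
Qed.

Lemma A_transitive a : exists phi, is_automorphism anb phi /\ phi A_origin = a.
Proof.
  destruct a as [v i].
  destruct (H_transitive v) as [phi [Hphi Ho]].
  pose proof (liftA_auto phi Hphi) as Hlift.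
  destruct i.
  - exists (liftA phi); split; [exact Hlift|]. simpl; rewrite Ho; reflexivity.
  - exists (fun a => liftA phi (rotA a)); split.
    + apply automorphism_comp; [exact Hlift|apply rotA_auto].
    + exact (f_equal (fun z => (z, D1)) Ho).
  - exists (fun a => liftA phi (rotA (rotA a))); split.
    + apply automorphism_comp; [exact Hlift|apply automorphism_comp; apply rotA_auto].
    + exact (f_equal (fun z => (z, D2)) Ho).
Qed.

Lemma saw_count_A a n : saw_count AV_eq_dec anb a n = sigmaA n.
Proof.
  destruct (A_transitive a) as [phi [Hphi <-]].
  apply saw_count_automorphism, Hphi.
Qed.

Lemma sigmaH_submult m n : (sigmaH (m + n) <= sigmaH m * sigmaH n)%nat.
Proof. apply (saw_count_submult HV_eq_dec hnb sigmaH H_origin), saw_count_H. Qed.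

Lemma sigmaA_submult m n : (sigmaA (m + n) <= sigmaA m * sigmaA n)%nat.
Proof. apply (saw_count_submult AV_eq_dec anb sigmaA A_origin), saw_count_A. Qed.

(** ** Fekete's lemma *)

Section Fekete.
Variable b : nat -> R.
Hypothesis b_nonneg : forall n, 0 <= b n.
Hypothesis b_subadd : forall m n, b (m + n) <= b m + b n.

Lemma b_linear q k r : b (q * k + r) <= INR q * b k + b r.
Proof.
  induction q as [|q IH]; [simpl; lra|].
  replace (S q * k + r)%nat with (k + (q * k + r))%nat by lia.
  pose proof (b_subadd k (q * k + r)). rewrite S_INR. lra.
Qed.

(** The limit of [b n / n] is the infimum of these ratios, i.e. minus the
    supremum of the set [neg_ratios] (the only completeness axiom available
    in the Stdlib is for suprema). *)
Definition neg_ratios (r : R) : Prop := exists n, (1 <= n)%nat /\ r = - (b n / INR n).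

Lemma ratio_nonneg n : (1 <= n)%nat -> 0 <= b n / INR n.
Proof.
  intros Hn. assert (0 < INR n) by (apply lt_0_INR; lia).
  apply Rmult_le_pos; [apply b_nonneg|left; apply Rinv_0_lt_compat; lra].
Qed.

Lemma neg_ratios_bound : bound neg_ratios.
Proof. exists 0. intros r [n [Hn ->]]. pose proof (ratio_nonneg n Hn). lra. Qed.

Lemma neg_ratios_inhabited : exists r, neg_ratios r.
Proof. exists (- (b 1 / INR 1)), 1%nat. split; auto. Qed.

Definition fekete_limit : R :=
  - proj1_sig (completeness neg_ratios neg_ratios_bound neg_ratios_inhabited).

Lemma fekete_limit_lub : is_lub neg_ratios (- fekete_limit).
Proof. unfold fekete_limit. rewrite Ropp_involutive. apply proj2_sig. Qed.

Lemma fekete_limit_le n : (1 <= n)%nat -> fekete_limit <= b n / INR n.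
Proof.
  intros Hn. destruct fekete_limit_lub as [Hub _].
  assert (neg_ratios (- (b n / INR n))) as Hr by (exists n; auto).
  apply Hub in Hr. lra.
Qed.

Lemma fekete_limit_nonneg : 0 <= fekete_limit.
Proof.
  destruct fekete_limit_lub as [_ Hlub].
  assert (- fekete_limit <= 0); [|lra]. apply Hlub.
  intros r [n [Hn ->]]. pose proof (ratio_nonneg n Hn). lra.
Qed.

Lemma fekete_limit_approx eps : 0 < eps ->
  exists k, (1 <= k)%nat /\ b k / INR k < fekete_limit + eps.
Proof.
  intros He. destruct fekete_limit_lub as [_ Hlub].
  apply Classical_Prop.NNPP. intros Hno.
  assert (- fekete_limit <= - fekete_limit - eps); [|lra]. apply Hlub.
  intros r [n [Hn ->]].
  destruct (Rlt_le_dec (b n / INR n) (fekete_limit + eps)) as [H1|H1]; [|lra].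
  exfalso; apply Hno; exists n; auto.
Qed.

(** Euclidean division [n = q k + r] gives [b n / n <= b k / k + C_k / n]. *)
Lemma ratio_bound k n : (1 <= k)%nat -> (1 <= n)%nat ->
  b n / INR n <= b k / INR k + (INR k * b 1 + b 0) / INR n.
Proof.
  intros Hk Hn.
  assert (Hkpos : 0 < INR k) by (apply lt_0_INR; lia).
  assert (Hnpos : 0 < INR n) by (apply lt_0_INR; lia).
  pose proof (Nat.div_mod n k ltac:(lia)) as Hdm.
  set (q := (n / k)%nat) in *. set (r := (n mod k)%nat) in *.
  assert (Hr : (r < k)%nat) by (apply Nat.mod_upper_bound; lia).
  assert (Hbr : b r <= INR k * b 1 + b 0).
  { pose proof (b_linear r 1 0) as H. rewrite Nat.mul_1_r, Nat.add_0_r in H.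
    assert (INR r <= INR k) by (apply le_INR; lia). pose proof (b_nonneg 1). nra. }
  assert (Hqk : INR q * INR k <= INR n) by (rewrite <- mult_INR; apply le_INR; lia).
  assert (Hbn : b n <= INR q * b k + (INR k * b 1 + b 0)).
  { rewrite Hdm, Nat.mul_comm. pose proof (b_linear q k r). lra. }
  assert (Hqbk : INR q * b k <= INR n * (b k / INR k)).
  { replace (INR q * b k) with (INR q * INR k * (b k / INR k)) by (field; lra).
    apply Rmult_le_compat_r; [apply ratio_nonneg|]; auto. }
  apply Rmult_le_reg_r with (INR n); [lra|].
  replace ((b k / INR k + (INR k * b 1 + b 0) / INR n) * INR n)
    with (INR n * (b k / INR k) + (INR k * b 1 + b 0)) by (field; lra).
  replace (b n / INR n * INR n) with (b n) by (field; lra). lra.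
Qed.

Lemma fekete_cv : Un_cv (fun n => b n / INR n) fekete_limit.
Proof.
  intros eps He.
  destruct (fekete_limit_approx (eps / 2)) as [k [Hk Hbk]]; [lra|].
  set (C := INR k * b 1 + b 0).
  destruct (INR_archimed (eps / 2) C) as [N HN]; [lra|].
  exists (S N). intros n Hn. unfold Rdist.
  assert (Hnpos : 0 < INR n) by (apply lt_0_INR; lia).
  assert (HC : C / INR n < eps / 2).
  { apply Rmult_lt_reg_r with (INR n); [lra|].
    replace (C / INR n * INR n) with C by (field; lra).
    assert (INR N <= INR n) by (apply le_INR; lia). nra. }
  pose proof (ratio_bound k n Hk ltac:(lia)) as Hbound. fold C in Hbound.
  pose proof (fekete_limit_le n ltac:(lia)).
  rewrite Rabs_right; lra.
Qed.

End Fekete.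

Lemma fekete_counts (s : nat -> nat) :
  (forall n, (1 <= s n)%nat) -> (forall m n, (s (m + n) <= s m * s n)%nat) ->
  exists k, 1 <= k /\ Un_cv (fun n => Rpower (INR (s n)) (/ INR n)) k /\
            forall n, k ^ n <= INR (s n).
Proof.
  intros Hpos Hsub.
  set (b n := ln (INR (s n))).
  assert (Hs : forall n, 1 <= INR (s n)) by (intros n; apply (le_INR 1), Hpos).
  assert (Hb0 : forall n, 0 <= b n).
  { intros n. unfold b. rewrite <- ln_1. destruct (Hs n) as [H|H];
      [left; apply ln_increasing; lra|rewrite H; lra]. }
  assert (Hbsub : forall m n : nat, b (m + n)%nat <= b m + b n).
  { intros m n. unfold b. rewrite <- ln_mult by (pose proof (Hs m); pose proof (Hs n); lra).
    rewrite <- mult_INR. pose proof (le_INR _ _ (Hsub m n)) as H.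
    destruct H as [H|H]; [left; apply ln_increasing; auto; pose proof (Hs (m + n)%nat); lra|].
    rewrite H; lra. }
  set (L := fekete_limit b Hb0).
  exists (exp L). split; [|split].
  - pose proof (fekete_limit_nonneg b Hb0). pose proof (exp_ineq1_le L). unfold L in *. lra.
  - intros e He.
    destruct (continuity_seq exp _ L (derivable_continuous_pt _ _ (derivable_pt_exp L))
                (fekete_cv b Hb0 Hbsub) e He) as [N HN].
    exists N. intros n Hn. unfold Rpower.
    replace (/ INR n * ln (INR (s n))) with (b n / INR n) by (unfold b, Rdiv; ring).
    apply HN; auto.
  - intros n. rewrite <- Rpower_pow by apply exp_pos. unfold Rpower. rewrite ln_exp.
    destruct n as [|n]; [simpl; rewrite Rmult_0_l, exp_0; apply Hs|].
    rewrite <- (exp_ln (INR (s (S n)))) by (pose proof (Hs (S n)); lra).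
    assert (HL : INR (S n) * L <= b (S n)).
    { pose proof (fekete_limit_le b Hb0 (S n) ltac:(lia)) as H.
      assert (0 < INR (S n)) by (apply lt_0_INR; lia).
      apply Rmult_le_compat_l with (r := INR (S n)) in H; [|lra].
      replace (INR (S n) * (b (S n) / INR (S n))) with (b (S n)) in H by (field; lra).
      exact H. }
    destruct HL as [HL|HL]; [left; apply exp_increasing; auto|unfold b in HL; rewrite HL; lra].
Qed.

(** ** Walks on A as lifts of walks on H *)

Ltac ddir := repeat match goal with
  | d : dir |- _ => destruct d
  | b : bool |- _ => destruct b end.

(** [tri_path i j long]: the walk inside a triangle from corner [i] to corner
    [j], the short way (one triangular edge) or the long way (two). *)
Definition tri_path (i j : dir) (long : bool) : list dir :=
  if dir_eq_dec i j then [] else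
  if dir_eq_dec j (dir_next i) then (if long then [D2; D2] else [D1])
  else (if long then [D1; D1] else [D2]).

Lemma tri_path_fst v i j b a : In a (traj anb (v, i) (tri_path i j b)) -> fst a = v.
Proof. ddir; simpl; intuition (subst; reflexivity). Qed.

Lemma tri_path_NoDup v i j b : NoDup (traj anb (v, i) (tri_path i j b)).
Proof.
  ddir; simpl;
  repeat (apply NoDup_cons; [simpl; intros Hx;
    repeat match goal with
    | H : _ \/ _ |- _ => destruct H as [H|H]
    | H : False |- _ => destruct H
    | H : (_, _) = (_, _) |- _ => inversion H
    end|]); apply NoDup_nil.
Qed.

Lemma tri_path_in_i v i j b : In (v, i) (traj anb (v, i) (tri_path i j b)).
Proof. ddir; simpl; auto. Qed.

Lemma tri_path_in_j v i j b : In (v, j) (traj anb (v, i) (tri_path i j b)).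
Proof. ddir; simpl; auto. Qed.

Lemma tri_path_length i j b : i <> j -> length (tri_path i j b) = if b then 2%nat else 1%nat.
Proof. ddir; simpl; intros H; try reflexivity; congruence. Qed.

Lemma tri_path_length_le i j b : (length (tri_path i j b) <= 2)%nat.
Proof. ddir; simpl; lia. Qed.

Lemma tri_path_short_length i j : (length (tri_path i j false) <= 1)%nat.
Proof. ddir; simpl; lia. Qed.

(** A block of a walk on A: go round the triangle to corner [j], then take
    the non-triangular edge [D0] to the next triangle, arriving at corner [j]. *)
Lemma traj_block v i j b r :
  traj anb (v, i) (tri_path i j b ++ D0 :: r) =
  traj anb (v, i) (tri_path i j b) ++ traj anb (hnb v j, j) r.
Proof. rewrite traj_app'. ddir; reflexivity. Qed.

(** The H-word of an A-word started at corner [i]: the directions of its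
    non-triangular edges. *)
Fixpoint projH (i : dir) (c : list dir) : list dir :=
  match c with
  | [] => []
  | D0 :: c' => i :: projH i c'
  | D1 :: c' => projH (dir_next i) c'
  | D2 :: c' => projH (dir_next (dir_next i)) c'
  end.

Lemma projH_block i j b r : projH i (tri_path i j b ++ D0 :: r) = j :: projH j r.
Proof. ddir; reflexivity. Qed.

Lemma projH_length i c : (length (projH i c) <= length c)%nat.
Proof.
  revert i; induction c as [|d c IH]; intros i; simpl; [lia|].
  pose proof (IH i); pose proof (IH (dir_next i)); pose proof (IH (dir_next (dir_next i))).
  destruct d; simpl; lia.
Qed.

(** The five self-avoiding walks that never leave the starting triangle. *)
Definition tri_tails : list (list dir) := [[]; [D1]; [D2]; [D1; D1]; [D2; D2]].

Lemma projH_tri_tails i c : In c tri_tails -> projH i c = [].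
Proof. simpl; intuition (subst; reflexivity). Qed.

Ltac solve_in := repeat (first [left; reflexivity | apply traj_head | right]).
Ltac dup_contra H := let Hn := fresh in
  (apply NoDup_cons_iff in H; destruct H as [Hn H];
   first [apply Hn; simpl; solve_in; fail | dup_contra H]).

Lemma saw_first_block u j c : NoDup (traj anb (u, j) c) ->
  In c tri_tails \/ exists j1 b c', c = tri_path j j1 b ++ D0 :: c'.
Proof.
  intros H.
  destruct c as [|[] c]; [left; simpl; solve_in| | |].
  - right. exists j, false, c. destruct j; reflexivity.
  - destruct c as [|[] c]; [left; simpl; solve_in| | |].
    + right. exists (dir_next j), false, c. destruct j; reflexivity.
    + destruct c as [|[] c]; [left; simpl; solve_in| | |].
      * right. exists (dir_next (dir_next j)), true, c. destruct j; reflexivity.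
      * exfalso. destruct j; simpl in H; dup_contra H.
      * exfalso. destruct j; simpl in H; dup_contra H.
    + exfalso. destruct j; simpl in H; dup_contra H.
  - destruct c as [|[] c]; [left; simpl; solve_in| | |].
    + right. exists (dir_next (dir_next j)), false, c. destruct j; reflexivity.
    + exfalso. destruct j; simpl in H; dup_contra H.
    + destruct c as [|[] c]; [left; simpl; solve_in| | |].
      * right. exists (dir_next j), true, c. destruct j; reflexivity.
      * exfalso. destruct j; simpl in H; dup_contra H.
      * exfalso. destruct j; simpl in H; dup_contra H.
Qed.

Lemma NoDup_app_disjoint {A : Type} (l1 l2 : list A) a :
  NoDup (l1 ++ l2) -> In a l1 -> In a l2 -> False.
Proof.
  intros H H1 H2. apply NoDup_app_remove_r in H as H'.
  induction l1 as [|x l1 IH]; simpl in *; [auto|].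
  apply NoDup_cons_iff in H as [Hn H]. apply NoDup_cons_iff in H' as [_ H'].
  destruct H1 as [<-|H1]; [apply Hn; apply in_app_iff; auto|eauto].
Qed.

Lemma saw_after_block u j j1 b c' :
  NoDup (traj anb (u, j) (tri_path j j1 b ++ D0 :: c')) ->
  NoDup (traj anb (hnb u j1, j1) c') /\ hd_error c' <> Some D0 /\
  (forall a, In a (traj anb (u, j) (tri_path j j1 b)) ->
             In a (traj anb (hnb u j1, j1) c') -> False).
Proof.
  rewrite traj_block. intros Hnd.
  assert (Hdis : forall a, In a (traj anb (u, j) (tri_path j j1 b)) ->
                           In a (traj anb (hnb u j1, j1) c') -> False)
    by (intros a; apply NoDup_app_disjoint, Hnd).
  split; [eapply NoDup_app_remove_l; eauto|split; auto].
  destruct c' as [|d c'']; simpl; [congruence|]. intros E; injection E as ->.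
  apply (Hdis (u, j1)); [apply tri_path_in_j|]. simpl. right.
  rewrite hnb_inv. apply traj_head.
Qed.

Lemma saw_block_decomp u j c :
  NoDup (traj anb (u, j) c) -> hd_error c <> Some D0 ->
  In c tri_tails \/
  exists j1 b c', c = tri_path j j1 b ++ D0 :: c' /\ j <> j1 /\
    NoDup (traj anb (hnb u j1, j1) c') /\ hd_error c' <> Some D0 /\
    (forall a, In a (traj anb (u, j) (tri_path j j1 b)) ->
               In a (traj anb (hnb u j1, j1) c') -> False).
Proof.
  intros Hnd Hhd.
  destruct (saw_first_block u j c Hnd) as [HT|[j1 [b [c' ->]]]]; [left; exact HT|right].
  exists j1, b, c'. split; [reflexivity|split; [|exact (saw_after_block _ _ _ _ _ Hnd)]].
  intros <-. apply Hhd. destruct j; reflexivity.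
Qed.

Fixpoint non_reversing (i : dir) (w : list dir) : bool :=
  match w with
  | [] => true
  | j :: w' => (if dir_eq_dec i j then false else true) && non_reversing j w'
  end.

Lemma saw_non_reversing u j w : NoDup (traj hnb u (j :: w)) -> non_reversing j w = true.
Proof.
  revert u j; induction w as [|k w IH]; intros u j H; simpl; auto.
  destruct (dir_eq_dec j k) as [<-|E].
  - exfalso. simpl in H. apply NoDup_cons_iff in H as [Hn _].
    apply Hn. simpl. right. rewrite hnb_inv. apply traj_head.
  - simpl. apply (IH (hnb u j)). simpl in H. apply NoDup_cons_iff in H. apply H.
Qed.

Fixpoint lifts (T : list (list dir)) (i : dir) (w : list dir) : list (list dir) :=
  match w with
  | [] => T
  | j :: w' => flat_map (fun b => map (fun r => tri_path i j b ++ D0 :: r) (lifts T j w'))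
                        [false; true]
  end.

Lemma in_lifts_cons T i j w' c : In c (lifts T i (j :: w')) <->
  exists b r, In r (lifts T j w') /\ c = tri_path i j b ++ D0 :: r.
Proof.
  simpl. rewrite in_app_iff, app_nil_r, !in_map_iff. split.
  - intros [[r [<- Hr]]|[r [<- Hr]]]; eauto.
  - intros [[] [r [Hr ->]]]; [right|left]; eauto.
Qed.

Lemma projH_lifts T i w c :
  (forall t k, In t T -> projH k t = []) -> In c (lifts T i w) -> projH i c = w.
Proof.
  intros HT. revert i c; induction w as [|j w IH]; intros i c Hc.
  - apply HT, Hc.
  - apply in_lifts_cons in Hc as [b [r [Hr ->]]].
    rewrite projH_block. f_equal. apply IH, Hr.
Qed.

Lemma map_prefix_NoDup (p : list dir) L : NoDup L -> NoDup (map (fun r => p ++ D0 :: r) L).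
Proof.
  intros H. apply NoDup_map_NoDup_ForallPairs; auto.
  intros a b _ _ E. apply app_inv_head in E. injection E; auto.
Qed.

(** Distinct block choices give distinct walks, as long as [w] is
    non-reversing (otherwise both ways round the triangle are empty). *)
Lemma lifts_NoDup T i w : NoDup T -> non_reversing i w = true -> NoDup (lifts T i w).
Proof.
  intros HT. revert i; induction w as [|j w IH]; intros i Hc; simpl; auto.
  simpl in Hc. destruct (dir_eq_dec i j) as [E|E]; [discriminate|].
  rewrite app_nil_r.
  apply NoDup_app; try (apply map_prefix_NoDup; auto).
  intros c H1 H2. apply in_map_iff in H1 as [r1 [<- _]]. apply in_map_iff in H2 as [r2 [E2 _]].
  revert E2. clear -E. ddir; simpl; try congruence; discriminate.
Qed.

Lemma lifts_saw i w u c : In c (lifts [[]] i w) -> NoDup (traj hnb u w) ->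
  NoDup (traj anb (u, i) c) /\
  (forall a, In a (traj anb (u, i) c) -> In (fst a) (traj hnb u w)).
Proof.
  revert i u c; induction w as [|j w IH]; intros i u c Hc Hnd.
  - destruct Hc as [<-|[]]. split.
    + repeat constructor; simpl; tauto.
    + intros a [<-|[]]; simpl; auto.
  - apply in_lifts_cons in Hc as [b [r [Hr ->]]].
    simpl in Hnd. apply NoDup_cons_iff in Hnd as [Hu Hnd].
    destruct (IH j (hnb u j) r Hr Hnd) as [IH1 IH2].
    rewrite traj_block. split.
    + apply NoDup_app; auto; [apply tri_path_NoDup|].
      intros a Ha1 Ha2. apply tri_path_fst in Ha1. apply IH2 in Ha2. subst. contradiction.
    + intros a Ha. apply in_app_iff in Ha as [Ha|Ha].
      * apply tri_path_fst in Ha. rewrite Ha. simpl; auto.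
      * simpl. right. apply IH2; auto.
Qed.

Lemma lifts_length i w c : In c (lifts [[]] i w) -> (length c <= 3 * length w)%nat.
Proof.
  revert i c; induction w as [|j w IH]; intros i c Hc.
  - destruct Hc as [<-|[]]. simpl; lia.
  - apply in_lifts_cons in Hc as [b [r [Hr ->]]].
    rewrite length_app. simpl. pose proof (tri_path_length_le i j b). pose proof (IH _ _ Hr). lia.
Qed.

Lemma lifts_long i w : exists c, In c (lifts [[]] i w) /\ (length w <= length c)%nat.
Proof.
  revert i; induction w as [|j w IH]; intros i.
  - exists []; simpl; auto.
  - destruct (IH j) as [r [Hr Hl]]. exists (tri_path i j false ++ D0 :: r). split.
    + apply in_lifts_cons; eauto.
    + rewrite length_app; simpl; lia.
Qed.

Lemma saw_in_lifts : forall n c u j, (length c <= n)%nat ->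
  NoDup (traj anb (u, j) c) -> hd_error c <> Some D0 ->
  In c (lifts tri_tails j (projH j c)) /\ non_reversing j (projH j c) = true.
Proof.
  induction n as [|n IH]; intros c u j Hlen Hnd Hhd.
  - destruct c; [|simpl in Hlen; lia]. split; [left|]; reflexivity.
  - destruct (saw_block_decomp u j c Hnd Hhd)
      as [HT|[j1 [b [c' [-> [Hjj [Hnd' [Hhd' _]]]]]]]].
    + rewrite (projH_tri_tails j c HT). split; [exact HT|reflexivity].
    + rewrite projH_block.
      rewrite length_app in Hlen. simpl in Hlen.
      destruct (IH c' (hnb u j1) j1 ltac:(lia) Hnd' Hhd') as [I1 I2].
      split.
      * apply in_lifts_cons. eauto.
      * simpl. destruct (dir_eq_dec j j1); [contradiction|]. exact I2.
Qed.

Lemma corners_meet (a b j j1 : dir) : a <> b -> j <> j1 -> a = j \/ a = j1 \/ b = j \/ b = j1.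
Proof. ddir; intros; auto; congruence. Qed.

(** For such a walk the H-word without its last letter is self-avoiding:
    every triangle that is left again has been visited at two corners (the
    entry and exit corners), so it cannot be entered a second time. *)
Lemma saw_projH_saw : forall n c u j, (length c <= n)%nat ->
  NoDup (traj anb (u, j) c) -> hd_error c <> Some D0 ->
  NoDup (traj hnb u (removelast (projH j c))) /\
  (projH j c <> [] -> forall y, In y (traj hnb u (removelast (projH j c))) ->
     exists a b, a <> b /\ In (y, a) (traj anb (u, j) c) /\ In (y, b) (traj anb (u, j) c)).
Proof.
  induction n as [|n IH]; intros c u j Hlen Hnd Hhd.
  - destruct c; [|simpl in Hlen; lia]. split; [repeat constructor; simpl; tauto|].
    intros H; contradiction H; reflexivity.
  - destruct (saw_block_decomp u j c Hnd Hhd)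
      as [HT|[j1 [b [c' [-> [Hjj [Hnd' [Hhd' Hdis]]]]]]]].
    + rewrite (projH_tri_tails j c HT).
      split; [repeat constructor; simpl; tauto|]. intros H; congruence.
    + rewrite projH_block, traj_block. rewrite length_app in Hlen. simpl in Hlen.
      destruct (IH c' (hnb u j1) j1 ltac:(lia) Hnd' Hhd') as [I1 I2].
      assert (Hu : exists a b', a <> b' /\
                In (u, a) (traj anb (u, j) (tri_path j j1 b) ++ traj anb (hnb u j1, j1) c') /\
                In (u, b') (traj anb (u, j) (tri_path j j1 b) ++ traj anb (hnb u j1, j1) c'))
        by (exists j, j1; split; auto; split; apply in_app_iff; left;
            [apply tri_path_in_i|apply tri_path_in_j]).
      destruct (projH j1 c') as [|k w'] eqn:Ew.
      * split; [repeat constructor; simpl; tauto|].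
        intros _ y [<-|[]]. exact Hu.
      * change (removelast (j1 :: k :: w')) with (j1 :: removelast (k :: w')) in *.
        simpl. split.
        -- constructor; auto. intros Hin.
           destruct (I2 ltac:(congruence) u Hin) as [a [a' [Ha [Ha1 Ha2]]]].
           destruct (corners_meet a a' j j1 Ha Hjj) as [E|[E|[E|E]]]; subst;
             eauto using tri_path_in_i, tri_path_in_j.
        -- intros _ y [<-|Hy]; [exact Hu|].
           destruct (I2 ltac:(congruence) y Hy) as [a [a' [Ha [Ha1 Ha2]]]].
           exists a, a'. split; auto. split; apply in_app_iff; right; auto.
Qed.

Definition sumR {A : Type} (F : A -> R) (l : list A) : R :=
  fold_right (fun a acc => F a + acc) 0 l.

Lemma sumR_app {A} (F : A -> R) l1 l2 : sumR F (l1 ++ l2) = sumR F l1 + sumR F l2.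
Proof. induction l1; simpl; [ring|rewrite IHl1; ring]. Qed.

Lemma sumR_flat_map {A B} (F : B -> R) (G : A -> list B) l :
  sumR F (flat_map G l) = sumR (fun a => sumR F (G a)) l.
Proof. induction l; simpl; [reflexivity|rewrite sumR_app, IHl; reflexivity]. Qed.

Lemma sumR_le {A} (F G : A -> R) l : (forall a, In a l -> F a <= G a) -> sumR F l <= sumR G l.
Proof.
  induction l as [|a l IH]; simpl; intros H; [lra|].
  pose proof (H a (or_introl eq_refl)). assert (sumR F l <= sumR G l) by (apply IH; auto). lra.
Qed.

Lemma sumR_nonneg {A} (F : A -> R) l : (forall a, 0 <= F a) -> 0 <= sumR F l.
Proof. intros H; induction l as [|a l IH]; simpl; [lra|]. pose proof (H a); lra. Qed.

Lemma sumR_const {A} (F : A -> R) l K : (forall a, In a l -> F a = K) -> sumR F l = INR (length l) * K.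
Proof.
  induction l as [|a l IH]; simpl; intros H; [ring|].
  rewrite IH, H by auto. destruct (length l); simpl; ring.
Qed.

Lemma sumR_const_le {A} (F : A -> R) l K :
  (forall a, In a l -> F a <= K) -> sumR F l <= INR (length l) * K.
Proof. intros H. rewrite <- (sumR_const (fun _ => K) l K) by auto. apply sumR_le; auto. Qed.

Lemma sumR_const_ge {A} (F : A -> R) l K :
  (forall a, In a l -> K <= F a) -> INR (length l) * K <= sumR F l.
Proof. intros H. rewrite <- (sumR_const (fun _ => K) l K) by auto. apply sumR_le; auto. Qed.

Lemma sumR_elem_le {A} (F : A -> R) l a : (forall b, 0 <= F b) -> In a l -> F a <= sumR F l.
Proof.
  intros H; induction l as [|b l IH]; simpl; [tauto|].
  intros [->|Ha]; [pose proof (sumR_nonneg F l H); lra|].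
  pose proof (H b); pose proof (IH Ha); lra.
Qed.

Lemma sumR_incl {A} (F : A -> R) (l l' : list A) :
  (forall a, 0 <= F a) -> NoDup l -> incl l l' -> sumR F l <= sumR F l'.
Proof.
  intros Hpos. revert l'; induction l as [|a l IH]; intros l' Hnd Hinc; simpl.
  - apply sumR_nonneg; auto.
  - apply NoDup_cons_iff in Hnd as [Ha Hnd].
    destruct (in_split a l') as [l1 [l2 ->]]; [apply Hinc; simpl; auto|].
    assert (sumR F l <= sumR F (l1 ++ l2)) as Hrest.
    { apply IH; auto. intros y Hy.
      assert (In y (l1 ++ a :: l2)) as Hy' by (apply Hinc; simpl; auto).
      apply in_app_iff in Hy'. apply in_app_iff. simpl in Hy'.
      destruct Hy' as [Hy'|[<-|Hy']]; auto; contradiction. }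
    rewrite sumR_app in *. simpl. lra.
Qed.

(** ** Generating-function comparison *)

(** Generating function of one block: one or two triangular edges, then
    one non-triangular edge. *)
Definition block_gf (x : R) : R := x ^ 2 + x ^ 3.

Lemma block_gf_pos x : 0 < x -> 0 < block_gf x.
Proof. intros Hx. unfold block_gf. pose proof (pow_lt x 2 Hx); pose proof (pow_lt x 3 Hx). lra. Qed.

Section Weights.
Variable x : R.
Hypothesis x_pos : 0 < x.
Hypothesis x_le_1 : x <= 1.

Definition weight (c : list dir) : R := x ^ length c.

Lemma weight_nonneg c : 0 <= weight c.
Proof. unfold weight; apply pow_le; lra. Qed.

Lemma block_gf_pow_nonneg m : 0 <= block_gf x ^ m.
Proof. apply pow_le. left. apply block_gf_pos, x_pos. Qed.

Lemma sumR_prefix p L :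
  sumR weight (map (fun r => p ++ D0 :: r) L) = x ^ (length p + 1) * sumR weight L.
Proof.
  induction L as [|c L IH]; simpl; [ring|]. rewrite IH. unfold weight.
  rewrite length_app. simpl length.
  replace (length p + S (length c))%nat with ((length p + 1) + length c)%nat by lia.
  rewrite pow_add. ring.
Qed.

Lemma sumR_lifts T i w : non_reversing i w = true ->
  sumR weight (lifts T i w) = block_gf x ^ length w * sumR weight T.
Proof.
  revert i; induction w as [|j w IH]; intros i Hc; simpl; [ring|].
  simpl in Hc. destruct (dir_eq_dec i j) as [E|E]; [discriminate|].
  rewrite app_nil_r, sumR_app, !sumR_prefix, IH by auto.
  rewrite !tri_path_length by auto. unfold block_gf. simpl. ring.
Qed.

Lemma sumR_saws {V} eqd nb (v : V) N :
  sumR weight (saws eqd nb v N) = INR (saw_count eqd nb v N) * x ^ N.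
Proof.
  rewrite saw_count_saws. apply sumR_const. intros c Hc. apply in_saws in Hc.
  unfold weight; rewrite (proj1 Hc); reflexivity.
Qed.

Lemma sumR_tri_tails : sumR weight tri_tails <= 5.
Proof. unfold tri_tails, weight; simpl. assert (x * x <= 1) by nra. lra. Qed.

(** *** Lower bound: lifting the self-avoiding walks of H *)

(** The lifts of the H-walks of length [n] from the origin; in the first
    triangle (where the walk starts at corner [D0]) only the short way is
    used, since both ways coincide when the first step is [D0]. *)
Definition lower_lifts (n : nat) : list (list dir) :=
  flat_map (fun w => match w with
                     | [] => []
                     | j1 :: w' => map (fun r => tri_path D0 j1 false ++ D0 :: r) (lifts [[]] j1 w')
                     end) (saws HV_eq_dec hnb H_origin n).

Lemma lower_lifts_weight n : (1 <= n)%nat ->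
  INR (sigmaH n) * x ^ 2 * block_gf x ^ (n - 1) <= sumR weight (lower_lifts n).
Proof.
  intros Hn. unfold lower_lifts. rewrite sumR_flat_map. unfold sigmaH. rewrite saw_count_saws.
  rewrite Rmult_assoc. apply sumR_const_ge. intros w Hw.
  apply in_saws in Hw as [Hl Hnd].
  destruct w as [|j1 w']; [simpl in Hl; lia|].
  rewrite sumR_prefix, sumR_lifts by (eapply saw_non_reversing; eauto).
  simpl in Hl. replace (n - 1)%nat with (length w') by lia.
  unfold weight; simpl. rewrite Rplus_0_r, Rmult_1_r.
  assert (x ^ 2 <= x ^ (length (tri_path D0 j1 false) + 1)).
  { pose proof (tri_path_short_length D0 j1) as Hlen.
    destruct (length (tri_path D0 j1 false)) as [|[|]]; simpl; try lia; nra. }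
  pose proof (block_gf_pow_nonneg (length w')). nra.
Qed.

Lemma lower_lifts_NoDup n : NoDup (lower_lifts n).
Proof.
  unfold lower_lifts. apply NoDup_flat_map_disjoint; [apply saws_NoDup| |].
  - intros [|j1 w'] Hw; [constructor|].
    apply map_prefix_NoDup, lifts_NoDup; [repeat constructor; simpl; tauto|].
    apply in_saws in Hw. eapply saw_non_reversing, (proj2 Hw).
  - intros [|j1 w1] [|j2 w2] c _ _ H1 H2; try contradiction.
    apply in_map_iff in H1 as [r1 [<- Hr1]]. apply in_map_iff in H2 as [r2 [E Hr2]].
    apply (f_equal (projH D0)) in E. rewrite !projH_block in E.
    assert (HT : forall (t : list dir) (k : dir), In t [[]] -> projH k t = [])
      by (intros t k [<-|[]]; reflexivity).
    rewrite (projH_lifts _ _ _ _ HT Hr1), (projH_lifts _ _ _ _ HT Hr2) in E. congruence.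
Qed.

Lemma lower_lifts_saws n c : In c (lower_lifts n) ->
  In c (flat_map (saws AV_eq_dec anb A_origin) (seq 0 (S (3 * n)))).
Proof.
  intros Hc. unfold lower_lifts in Hc. apply in_flat_map in Hc as [[|j1 w'] [Hw Hc]];
    [destruct Hc|].
  apply in_saws in Hw as [Hl Hnd].
  apply in_map_iff in Hc as [r [<- Hr]].
  assert (HG : In (tri_path D0 j1 false ++ D0 :: r) (lifts [[]] D0 (j1 :: w')))
    by (apply in_lifts_cons; eauto).
  destruct (lifts_saw _ _ H_origin _ HG Hnd) as [Hs _].
  pose proof (lifts_length _ _ _ HG). simpl in Hl.
  apply in_flat_map. exists (length (tri_path D0 j1 false ++ D0 :: r)). split.
  - apply in_seq. simpl in *. lia.
  - apply in_saws. split; auto.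
Qed.

Lemma lower_bound n : (1 <= n)%nat ->
  INR (sigmaH n) * x ^ 2 * block_gf x ^ (n - 1) <=
  sumR (fun N => INR (sigmaA N) * x ^ N) (seq 0 (S (3 * n))).
Proof.
  intros Hn. eapply Rle_trans; [apply lower_lifts_weight, Hn|].
  eapply Rle_trans.
  - apply (sumR_incl weight _ _ weight_nonneg (lower_lifts_NoDup n) (lower_lifts_saws n)).
  - rewrite sumR_flat_map. apply sumR_le. intros N _. rewrite sumR_saws. unfold sigmaA. lra.
Qed.

(** *** Upper bound: projecting the self-avoiding walks of A *)

Definition reduced_words (j1 : dir) (m : nat) : list (list dir) :=
  filter (fun w => andb (non_reversing j1 w) (is_saw HV_eq_dec hnb (hnb H_origin j1) (removelast w)))
         (all_dirs m).

Definition reduced_bound (m : nat) : nat := match m with 0 => 1 | S m' => 3 * sigmaH m' end.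

(** A reduced word is a self-avoiding H-walk of length [m - 1] plus one letter. *)
Lemma reduced_words_length j1 m : (length (reduced_words j1 m) <= reduced_bound m)%nat.
Proof.
  destruct m as [|m']; [reflexivity|].
  simpl reduced_bound. rewrite <- (saw_count_H (hnb H_origin j1) m'), saw_count_saws.
  transitivity (length (map (fun p => fst p ++ [snd p])
                 (list_prod (saws HV_eq_dec hnb (hnb H_origin j1) m') [D0; D1; D2]))).
  - apply NoDup_incl_length; [apply NoDup_filter, all_dirs_NoDup|].
    intros w Hw. apply filter_In in Hw as [Hw Hb]. apply all_dirs_spec in Hw.
    apply andb_prop in Hb as [_ Hb]. apply is_saw_spec in Hb.
    assert (Hne : w <> []) by (intros ->; simpl in Hw; lia).
    pose proof (app_removelast_last D0 Hne) as E.
    apply in_map_iff. exists (removelast w, last w D0). split; [symmetry; exact E|].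
    apply in_prod.
    + apply in_saws. split; auto.
      apply (f_equal (@length dir)) in E. rewrite length_app in E. simpl in E. lia.
    + destruct (last w D0); simpl; auto.
  - rewrite length_map, length_prod. simpl. lia.
Qed.

Definition reduced_lifts (j1 : dir) (N : nat) : list (list dir) :=
  flat_map (fun m => flat_map (lifts tri_tails j1) (reduced_words j1 m)) (seq 0 (S N)).

Definition upper_candidates (N : nat) : list (list dir) :=
  tri_tails ++ flat_map (fun j1 => flat_map (fun b =>
          map (fun r => tri_path D0 j1 b ++ D0 :: r) (reduced_lifts j1 N))
          [false; true]) [D0; D1; D2].

Lemma saws_in_candidates N : incl (saws AV_eq_dec anb A_origin N) (upper_candidates N).
Proof.
  intros c Hc. apply in_saws in Hc as [Hl Hnd].
  unfold upper_candidates. apply in_app_iff.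
  destruct (saw_first_block _ _ _ Hnd) as [HT|[j1 [b [c' ->]]]]; [left; auto|right].
  destruct (saw_after_block _ _ _ _ _ Hnd) as [Hnd' [Hhd' _]].
  destruct (saw_in_lifts (length c') c' _ _ (le_n _) Hnd' Hhd') as [Hlift Hnr].
  destruct (saw_projH_saw (length c') c' _ _ (le_n _) Hnd' Hhd') as [Hsaw _].
  apply in_flat_map. exists j1. split; [destruct j1; simpl; auto|].
  apply in_flat_map. exists b. split; [destruct b; simpl; auto|].
  apply in_map_iff. exists c'. split; auto.
  apply in_flat_map. exists (length (projH j1 c')). split.
  - apply in_seq. pose proof (projH_length j1 c'). rewrite length_app in Hl. simpl in Hl. lia.
  - apply in_flat_map. exists (projH j1 c'). split; auto.
    apply filter_In. split; [apply all_dirs_spec; reflexivity|].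
    rewrite Hnr. apply is_saw_spec; auto.
Qed.

Definition reduced_series (N : nat) : R :=
  sumR (fun m => INR (reduced_bound m) * block_gf x ^ m * 5) (seq 0 (S N)).

Lemma sumR_reduced_lifts j1 N : sumR weight (reduced_lifts j1 N) <= reduced_series N.
Proof.
  unfold reduced_lifts. rewrite sumR_flat_map. apply sumR_le. intros m _.
  rewrite sumR_flat_map.
  eapply Rle_trans; [apply sumR_const_le with (K := block_gf x ^ m * 5)|].
  - intros w Hw. apply filter_In in Hw as [Hw Hb]. apply all_dirs_spec in Hw.
    apply andb_prop in Hb as [Hb _].
    rewrite sumR_lifts, Hw by auto.
    pose proof (block_gf_pow_nonneg m). pose proof sumR_tri_tails. nra.
  - pose proof (le_INR _ _ (reduced_words_length j1 m)).
    pose proof (block_gf_pow_nonneg m). nra.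
Qed.

(** Summing over the 3 directions and 2 ways round the first triangle. *)
Lemma upper_bound N : INR (sigmaA N) * x ^ N <= 5 + 6 * reduced_series N.
Proof.
  unfold sigmaA. rewrite <- sumR_saws.
  eapply Rle_trans;
    [apply (sumR_incl _ _ _ weight_nonneg (saws_NoDup _ _ _ _) (saws_in_candidates N))|].
  unfold upper_candidates. rewrite sumR_app, sumR_flat_map.
  pose proof sumR_tri_tails.
  enough (sumR (fun j1 => sumR weight (flat_map (fun b =>
          map (fun r => tri_path D0 j1 b ++ D0 :: r) (reduced_lifts j1 N)) [false; true]))
          [D0; D1; D2] <= INR 3 * (INR 2 * reduced_series N)) by (simpl INR in *; lra).
  apply sumR_const_le. intros j1 _. rewrite sumR_flat_map. apply sumR_const_le. intros b _.
  rewrite sumR_prefix.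
  pose proof (sumR_reduced_lifts j1 N).
  pose proof (sumR_nonneg _ (reduced_lifts j1 N) weight_nonneg).
  assert (x ^ (length (tri_path D0 j1 b) + 1) <= 1) by (rewrite <- (pow1 (length (tri_path D0 j1 b) + 1)); apply pow_incr; lra).
  pose proof (pow_le x (length (tri_path D0 j1 b) + 1) ltac:(lra)). nra.
Qed.

End Weights.

(** The zigzag walk [D0 D1 D0 D1 ...] on H moves steadily to the right. *)
Fixpoint zigzag (k : nat) : list dir := match k with O => [] | S k' => D0 :: D1 :: zigzag k' end.

Lemma zigzag_saw k : forall x y, NoDup (traj hnb (x, y, false) (zigzag k)) /\
  forall p, In p (traj hnb (x, y, false) (zigzag k)) -> (x <= fst (fst p))%Z.
Proof.
  induction k as [|k IH]; intros x y; simpl.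
  - split; [repeat constructor; simpl; tauto|]. intros p [<-|[]]; simpl; lia.
  - destruct (IH (x + 1)%Z y) as [H1 H2]. split.
    + constructor; [|constructor]; auto.
      * intros [E|E]; [discriminate|]. apply H2 in E; simpl in E; lia.
      * intros E. apply H2 in E; simpl in E; lia.
    + intros p [<-|[<-|Hp]]; simpl; try lia. apply H2 in Hp; lia.
Qed.

Lemma zigzag_length k : length (zigzag k) = (2 * k)%nat.
Proof. induction k; simpl; lia. Qed.

Lemma sigmaH_pos n : (1 <= sigmaH n)%nat.
Proof.
  destruct (zigzag_saw n 0%Z 0%Z) as [H _].
  apply (saw_count_pos _ _ _ _ (zigzag n)); [rewrite zigzag_length; lia|exact H].
Qed.

Lemma sigmaA_pos n : (1 <= sigmaA n)%nat.
Proof.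
  destruct (zigzag_saw n 0%Z 0%Z) as [H _].
  destruct (lifts_long D0 (zigzag n)) as [c [Hc Hl]].
  destruct (lifts_saw _ _ H_origin _ Hc H) as [Hs _].
  apply (saw_count_pos _ _ _ _ c); [rewrite zigzag_length in Hl; lia|exact Hs].
Qed.

Lemma root_test_bound (s : nat -> nat) k x :
  Un_cv (fun n => Rpower (INR (s n)) (/ INR n)) k -> (forall n, (1 <= s n)%nat) ->
  1 <= k -> 0 < x -> x * k < 1 ->
  exists C q, 0 <= C /\ 0 < q < 1 /\ forall n, INR (s n) * x ^ n <= C * q ^ n.
Proof.
  intros Hcv Hpos Hk Hx Hxk.
  set (r := (k + / x) / 2).
  assert (Hkx : k < / x) by (apply Rmult_lt_reg_l with x; auto; rewrite Rinv_r; lra).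
  assert (Hrx : r * x < 1) by (unfold r; assert (/ x * x = 1) by (field; lra); nra).
  destruct (Hcv (r - k)) as [N HN]; [unfold r; lra|].
  set (C := 1 + sumR (fun n => INR (s n)) (seq 0 (S N))).
  assert (HC0 : 0 <= sumR (fun n => INR (s n)) (seq 0 (S N)))
    by (apply sumR_nonneg; intros; apply pos_INR).
  assert (Hsn : forall n, INR (s n) <= C * r ^ n).
  { intros n. assert (Hrn : 1 <= r ^ n) by (apply pow_R1_Rle; unfold r; lra).
    destruct (Nat.lt_ge_cases n (S N)) as [Hn|Hn].
    - assert (INR (s n) <= sumR (fun n => INR (s n)) (seq 0 (S N))).
      { apply (sumR_elem_le (fun n => INR (s n))); [intros; apply pos_INR|]. apply in_seq. lia. }
      unfold C; nra.
    - assert (Hspos : 0 < INR (s n)) by (apply lt_0_INR; pose proof (Hpos n); lia).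
      assert (Hn0 : 0 < INR n) by (apply lt_0_INR; lia).
      specialize (HN n ltac:(lia)). unfold Rdist in HN.
      apply Rabs_def2 in HN as [HN _].
      set (y := Rpower (INR (s n)) (/ INR n)) in *.
      assert (Hy : 0 < y) by (unfold y, Rpower; apply exp_pos).
      assert (E : y ^ n = INR (s n)).
      { rewrite <- Rpower_pow by auto. unfold y. rewrite Rpower_mult, Rinv_l by lra.
        apply Rpower_1; auto. }
      rewrite <- E. assert (y ^ n <= r ^ n) by (apply pow_incr; lra). unfold C; nra. }
  exists C, (r * x). split; [unfold C; lra|]. split; [split; [apply Rmult_lt_0_compat; unfold r; lra|exact Hrx]|].
  intros n. rewrite Rpow_mult_distr. pose proof (Hsn n). pose proof (pow_le x n ltac:(lra)). nra.
Qed.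

Lemma bernoulli h n : 0 <= h -> 1 + INR n * h <= (1 + h) ^ n.
Proof.
  intros Hh. induction n as [|n IH]; [simpl; lra|].
  rewrite S_INR. simpl pow. pose proof (pos_INR n). nra.
Qed.

Lemma exp_not_linear r a b : 1 < r -> ~ (forall n, r ^ n <= a * INR n + b).
Proof.
  intros Hr H. set (h := r - 1). assert (Hh : 0 < h) by (unfold h; lra).
  set (K := 2 * Rabs a + Rabs b + 1).
  destruct (INR_archimed (h * h) K) as [N HN]; [nra|].
  set (n := S N).
  assert (Hn1 : 1 <= INR n) by (unfold n; rewrite S_INR; pose proof (pos_INR N); lra).
  assert (HK : K < INR n * h * h).
  { assert (INR N <= INR n) by (apply le_INR; unfold n; lia). nra. }
  specialize (H (n * 2)%nat). rewrite pow_mult, mult_INR in H. simpl (INR 2) in H.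
  pose proof (bernoulli h n (Rlt_le _ _ Hh)) as Hb. replace (1 + h) with r in Hb by (unfold h; ring).
  assert (Hsq : INR n * h * (INR n * h) <= (r ^ n) ^ 2).
  { assert (0 <= INR n * h) by (apply Rmult_le_pos; lra).
    replace ((r ^ n) ^ 2) with (r ^ n * r ^ n) by ring. apply Rmult_le_compat; lra. }
  assert (a * (INR n * (1 + 1)) + b <= INR n * K).
  { unfold K. pose proof (Rle_abs a). pose proof (Rle_abs b). pose proof (Rabs_pos a).
    pose proof (Rabs_pos b). nra. }
  nra.
Qed.

Lemma sumR_scale {A} (F : A -> R) c l : sumR (fun a => c * F a) l = c * sumR F l.
Proof. induction l; simpl; [ring|rewrite IHl; ring]. Qed.

Lemma geom_sum q : 0 <= q < 1 -> forall n k, sumR (fun m => q ^ m) (seq k n) <= q ^ k / (1 - q).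
Proof.
  intros Hq. induction n as [|n IH]; intros k; simpl.
  - apply Rmult_le_pos; [apply pow_le; lra|left; apply Rinv_0_lt_compat; lra].
  - specialize (IH (S k)). simpl in IH.
    assert (q ^ k + q * q ^ k / (1 - q) = q ^ k / (1 - q)) by (field; lra). lra.
Qed.

(** ** Comparison of the radii of convergence *)

(** Below [1 / kA] the generating function of A converges, hence so does the
    H-series [sum sigmaH(n) block_gf(x)^n], so [kH block_gf(x) <= 1]. *)
Lemma below_radius_A kH kA : 1 <= kA ->
  (forall n, kH ^ n <= INR (sigmaH n)) ->
  Un_cv (fun n => Rpower (INR (sigmaA n)) (/ INR n)) kA ->
  forall x, 0 < x -> x * kA < 1 -> kH * block_gf x <= 1.
Proof.
  intros HkA HpH HcvA x Hx HxA.
  assert (Hx1 : x < 1) by nra.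
  destruct (root_test_bound sigmaA kA x HcvA sigmaA_pos HkA Hx HxA) as [C [q [HC0 [Hq HC]]]].
  assert (HA : forall N, INR (sigmaA N) * x ^ N <= C).
  { intros N. pose proof (HC N).
    assert (q ^ N <= 1) by (rewrite <- (pow1 N); apply pow_incr; lra). nra. }
  set (f := block_gf x). assert (Hf : 0 < f) by (apply block_gf_pos, Hx).
  destruct (Rle_lt_dec (kH * f) 1) as [Hle|Hgt]; auto. exfalso.
  apply (exp_not_linear (kH * f) (3 * C * f / (x * x)) (C * f / (x * x) + 1) Hgt).
  intros [|n].
  - simpl. assert (0 <= C * f / (x * x)) by (apply Rmult_le_pos; [nra|left; apply Rinv_0_lt_compat; nra]).
    lra.
  - pose proof (lower_bound x Hx (Rlt_le _ _ Hx1) (S n) ltac:(lia)) as HL.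
    replace (S n - 1)%nat with n in HL by lia.
    pose proof (sumR_const_le _ (seq 0 (S (3 * S n))) C (fun N _ => HA N)) as Hsum.
    rewrite length_seq in Hsum.
    assert (Hfn : 0 <= f ^ n) by (apply pow_le; lra).
    assert (kH ^ S n * x ^ 2 * f ^ n <= INR (S (3 * S n)) * C).
    { pose proof (HpH (S n)). assert (0 <= x ^ 2 * f ^ n) by (apply Rmult_le_pos; auto; apply pow_le; lra).
      fold f in HL. nra. }
    replace (INR (S (3 * S n))) with (3 * INR (S n) + 1) in H
      by (rewrite (S_INR (3 * S n)), mult_INR; simpl (INR 3); ring).
    rewrite Rpow_mult_distr. apply Rmult_le_reg_r with (x * x); [nra|].
    replace ((3 * C * f / (x * x) * INR (S n) + (C * f / (x * x) + 1)) * (x * x))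
      with ((3 * INR (S n) + 1) * C * f + x * x) by (field; lra).
    replace (kH ^ S n * f ^ S n * (x * x)) with (kH ^ S n * x ^ 2 * f ^ n * f) by (simpl; ring).
    nra.
Qed.

(** If [kH block_gf(x) < 1] the H-series converges, hence the A-series is
    bounded at [x], so [x kA <= 1]. *)
Lemma below_radius_H kH kA : 1 <= kH ->
  (forall n, kA ^ n <= INR (sigmaA n)) ->
  Un_cv (fun n => Rpower (INR (sigmaH n)) (/ INR n)) kH ->
  forall x, 0 < x -> kH * block_gf x < 1 -> x * kA <= 1.
Proof.
  intros HkH HpA HcvH x Hx HxH.
  set (f := block_gf x). assert (Hf : 0 < f) by (apply block_gf_pos, Hx).
  assert (Hx1 : x <= 1).
  { destruct (Rle_lt_dec x 1); auto. exfalso. unfold f, block_gf in *.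
    assert (1 <= x ^ 2) by (apply pow_R1_Rle; lra).
    assert (1 <= x ^ 3) by (apply pow_R1_Rle; lra). nra. }
  destruct (root_test_bound sigmaH kH f HcvH sigmaH_pos HkH Hf ltac:(unfold f; lra))
    as [C [q [HC0 [Hq HC]]]].
  set (E := 1 + 3 * C * f / q).
  assert (HE : forall m, INR (reduced_bound m) * f ^ m <= E * q ^ m).
  { assert (0 <= 3 * C * f / q) by (apply Rmult_le_pos; [nra|left; apply Rinv_0_lt_compat; lra]).
    intros [|m]; [simpl; unfold E; lra|].
    unfold reduced_bound. rewrite mult_INR. simpl (INR 3).
    pose proof (HC m). pose proof (pow_le q m ltac:(lra)).
    replace (E * q ^ S m) with (q ^ m * q + 3 * C * f * q ^ m) by (unfold E; simpl; field; lra).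
    assert (0 <= q ^ m * q) by (apply Rmult_le_pos; lra).
    simpl. nra. }
  assert (HB : forall N, reduced_series x N <= 5 * E / (1 - q)).
  { intros N. unfold reduced_series. fold f.
    eapply Rle_trans; [apply sumR_le with (G := fun m => 5 * E * q ^ m); intros m _;
                        pose proof (HE m); lra|].
    rewrite sumR_scale. pose proof (geom_sum q ltac:(lra) (S N) 0) as Hg. simpl pow in Hg.
    assert (0 <= E) by (pose proof (HE 0%nat); simpl in *; lra).
    replace (5 * E / (1 - q)) with (5 * E * (1 / (1 - q))) by (field; lra).
    apply Rmult_le_compat_l; [lra|exact Hg]. }
  destruct (Rle_lt_dec (x * kA) 1) as [Hle|Hgt]; auto. exfalso.
  apply (exp_not_linear (x * kA) 0 (5 + 6 * (5 * E / (1 - q))) Hgt).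
  intros n. rewrite Rmult_0_l, Rplus_0_l, Rpow_mult_distr.
  pose proof (upper_bound x Hx Hx1 n). pose proof (HB n). pose proof (HpA n).
  pose proof (pow_le x n ltac:(lra)). nra.
Qed.

Lemma block_gf_scale_down t y : 0 < y -> 0 < t <= 1 -> t ^ 3 * block_gf y <= block_gf (t * y).
Proof.
  intros Hy Ht. unfold block_gf. rewrite !Rpow_mult_distr.
  assert (t ^ 3 <= t ^ 2) by (simpl; nra).
  pose proof (pow_lt y 2 Hy). pose proof (pow_lt y 3 Hy). nra.
Qed.

Lemma block_gf_scale_up t y : 0 < y -> 1 <= t -> block_gf (t * y) <= t ^ 3 * block_gf y.
Proof.
  intros Hy Ht. unfold block_gf. rewrite !Rpow_mult_distr.
  assert (t ^ 2 <= t ^ 3) by (simpl; nra).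
  pose proof (pow_lt y 2 Hy). pose proof (pow_lt y 3 Hy). nra.
Qed.

Lemma cube_below_one g : 1 < g -> exists t, 0 < t < 1 /\ 1 < t ^ 3 * g.
Proof.
  intros Hg. set (d := (1 - / g) / 6).
  assert (Hig : 0 < / g < 1) by (split; [apply Rinv_0_lt_compat|rewrite <- Rinv_1; apply Rinv_lt_contravar]; lra).
  assert (Hd : 0 < d < 1) by (unfold d; lra).
  exists (1 - d). split; [lra|].
  assert (1 - 3 * d <= (1 - d) ^ 3).
  { pose proof (Rmult_le_pos (d * d) (3 - d) ltac:(nra) ltac:(lra)). simpl. nra. }
  assert ((1 - 3 * d) * g = (g + 1) / 2) by (unfold d; field; lra). nra.
Qed.

Lemma cube_above_one g : 0 < g < 1 -> exists t, 1 < t /\ t ^ 3 * g < 1.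
Proof.
  intros Hg. set (d := (1 - g) / 8). assert (Hd : 0 < d <= 1 / 8) by (unfold d; lra).
  exists (1 + d). split; [lra|].
  assert ((1 + d) ^ 3 <= 1 + 7 * d).
  { pose proof (Rmult_le_pos (d * d) (1 - 8 * d) ltac:(nra) ltac:(lra)). simpl. nra. }
  assert ((1 + 7 * d) * g < 1) by (unfold d; nra). nra.
Qed.

Lemma critical_point kH a : 0 < kH -> 0 < a ->
  (forall x, 0 < x < a -> kH * block_gf x <= 1) ->
  (forall x, 0 < x -> kH * block_gf x < 1 -> x <= a) ->
  kH * block_gf a = 1.
Proof.
  intros HkH Ha Hbelow Habove.
  assert (Hg : 0 < kH * block_gf a) by (apply Rmult_lt_0_compat; auto; apply block_gf_pos, Ha).
  destruct (Rtotal_order (kH * block_gf a) 1) as [Hlt|[Heq|Hgt]]; auto; exfalso.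
  - destruct (cube_above_one _ (conj Hg Hlt)) as [t [Ht Ht3]].
    pose proof (block_gf_scale_up t a Ha (Rlt_le _ _ Ht)).
    pose proof (Habove (t * a) ltac:(nra) ltac:(nra)). nra.
  - destruct (cube_below_one _ Hgt) as [t [Ht Ht3]].
    pose proof (block_gf_scale_down t a Ha (conj (proj1 Ht) (Rlt_le _ _ (proj2 Ht)))).
    pose proof (Hbelow (t * a) ltac:(nra)). nra.
Qed.

Theorem mainTheorem5 :
  exists kH kA : R,
    is_connective_constant sigmaH kH /\
    is_connective_constant sigmaA kA /\
    1 / kA ^ 2 + 1 / kA ^ 3 = 1 / kH.
Proof.
  destruct (fekete_counts sigmaH sigmaH_pos sigmaH_submult) as [kH [HkH [HcvH HpH]]].
  destruct (fekete_counts sigmaA sigmaA_pos sigmaA_submult) as [kA [HkA [HcvA HpA]]].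
  exists kH, kA. split; [exact HcvH|]. split; [exact HcvA|].
  assert (Ha : 0 < / kA) by (apply Rinv_0_lt_compat; lra).
  assert (Hcrit : kH * block_gf (/ kA) = 1).
  { apply critical_point; [lra|exact Ha| |].
    - intros x Hx. apply (below_radius_A kH kA HkA HpH HcvA x (proj1 Hx)).
      apply Rmult_lt_reg_r with (/ kA); [exact Ha|]. field_simplify; lra.
    - intros x Hx Hlt. pose proof (below_radius_H kH kA HkH HpA HcvH x Hx Hlt).
      apply Rmult_le_reg_r with kA; [lra|]. field_simplify; lra. }
  transitivity (kH * block_gf (/ kA) / kH); [unfold block_gf; field; lra|].
  rewrite Hcrit. reflexivity.
Qed.
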